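(* Let $\mathcal{U}$ be a $Sob$ effect algebra on a complex Hilbert space $H$. Then $\mathcal{U}$ is convex if and only if $A\in\mathcal{U}$ and $0\le\lambda\le1$ imply $\lambda A\in\mathcal{U}$.
   Context: $\mathcal{E}(H)$ is the set of effects ($0\le a\le I$). A sub-observable with outcome space $(\Omega,\mathcal{F})$ is a map $\mathcal{F}\to\mathcal{E}(H)$ countably additive in the strong operator topology; it is an observable if its value on $\Omega$ is $I$; $Sob(H)$ is the set of sub-observables, with pointwise linear operations. A subset $\mathcal{U}\subseteq Sob(H)$ all of whose elements have the same outcome space is a $Sob$ effect algebra if: (S1) there is an observable $Z\in\mathcal{U}$; (S2) $A\in\mathcal{U}$ implies $Z-A\in\mathcal{U}$; (S3) $A,B\in\mathcal{U}$ and $A+B\in Sob(H)$ imply $A+B\in\mathcal{U}$. A subset $\mathcal{V}\subseteq Sob(H)$ is convex if whenever $A_i\in\mathcal{V}$, $0\le\lambda_i\le1$ ($i=1,\dots,n$) and $\sum_{i=1}^n\lambda_i=1$, we have $\sum_{i=1}^n\lambda_iA_i\in\mathcal{V}$. *)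

From HB Require Import structures.
From mathcomp Require Import all_boot all_order all_algebra.
From mathcomp Require Import complex.
From mathcomp Require Import classical_sets boolp reals measure.
Set Implicit Arguments. Unset Strict Implicit. Unset Printing Implicit Defensive.
Import Order.TTheory GRing.Theory Num.Theory.
Local Open Scope ring_scope.
Local Open Scope classical_set_scope.
Local Open Scope complex_scope.

Section Hilbert.
Variables (R : realType) (H : lmodType R[i]) (ip : H -> H -> R[i]).

Definition hnorm (x : H) : R := Num.sqrt (complex.Re (ip x x)).

Definition hconv (u : nat -> H) (l : H) : Prop :=
  forall e : R, 0 < e -> exists N : nat, forall n, (N <= n)%N -> hnorm (u n - l) < e.
Definition hcauchy (u : nat -> H) : Prop :=
  forall e : R, 0 < e -> exists N : nat, forall m n, (N <= m)%N -> (N <= n)%N ->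
    hnorm (u m - u n) < e.

Record is_hilbert : Prop := IsHilbert {
  ip_linear : forall (a : R[i]) (x y z : H), ip (a *: x + y) z = a * ip x z + ip y z;
  ip_conj : forall x y : H, ip y x = conjc (ip x y);
  ip_ge0 : forall x : H, 0 <= ip x x;
  ip_eq0 : forall x : H, ip x x = 0 -> x = 0;
  ip_complete : forall u : nat -> H, hcauchy u -> exists l, hconv u l }.

Definition is_bounded_op (a : H -> H) : Prop :=
  (forall (c : R[i]) (x y : H), a (c *: x + y) = c *: a x + a y) /\
  exists M : R, forall x, hnorm (a x) <= M * hnorm x.

(* effects: self-adjoint bounded operators with 0 <= a <= I *)
Definition is_effect (a : H -> H) : Prop :=
  is_bounded_op a /\ (forall x y, ip (a x) y = ip x (a y)) /\
  (forall x, 0 <= ip (a x) x) /\ (forall x, 0 <= ip (x - a x) x).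

Variables (d : measure_display) (Omega : measurableType d).

Definition mset := {E : set Omega | measurable E}.

Definition opfun := mset -> H -> H.

Definition opadd (A B : opfun) : opfun := fun E x => A E x + B E x.
Definition opsub (A B : opfun) : opfun := fun E x => A E x - B E x.
Definition opscale (l : R) (A : opfun) : opfun := fun E x => l%:C *: A E x.
Definition opsum (n : nat) (l : 'I_n -> R) (A : 'I_n -> opfun) : opfun :=
  fun E x => \sum_(i < n) (l i)%:C *: A i E x.

(* sub-observables: effect-valued, countably additive in the strong operator
   topology *)
Definition is_sob (A : opfun) : Prop :=
  (forall E, is_effect (A E)) /\
  (forall (F : nat -> mset) (G : mset),
     trivIset setT (fun n => proj1_sig (F n)) ->
     proj1_sig G = \bigcup_n proj1_sig (F n) ->
     forall x : H, hconv (fun n => \sum_(k < n) A (F k) x) (A G x)).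

Definition is_observable (A : opfun) : Prop :=
  is_sob A /\ forall E : mset, proj1_sig E = setT -> forall x, A E x = x.

(* Sob effect algebras (conditions S1-S3) *)
Definition sob_effect_algebra (U : set opfun) : Prop :=
  (forall A, U A -> is_sob A) /\
  (exists Z, U Z /\ is_observable Z /\ (forall A, U A -> U (opsub Z A))) /\
  (forall A B, U A -> U B -> is_sob (opadd A B) -> U (opadd A B)).

Definition convex_sob (U : set opfun) : Prop :=
  forall (n : nat) (A : 'I_n -> opfun) (l : 'I_n -> R),
    (forall i, U (A i)) -> (forall i, 0 <= l i <= 1) -> \sum_(i < n) l i = 1 ->
    U (opsum l A).

End Hilbert.

(** The zero sub-observable [Z - Z] lies in [U], so [l A = l A + (1 - l) 0] is
    a convex combination; this gives one direction.  Conversely, build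
    [\sum_i l_i A_i] one summand at a time.  Every partial sum is a sub-convex
    combination (nonnegative weights of total at most 1) of sub-observables,
    hence itself a sub-observable, because the effects form a convex set
    containing 0 and strong convergence is preserved by finite linear
    combinations.  So axiom (S3) lets us add the next summand [l_i A_i], which
    lies in [U] by the scaling hypothesis. *)

From HB Require Import structures.
From mathcomp Require Import all_boot all_order all_algebra.
From mathcomp Require Import complex.
From mathcomp Require Import classical_sets boolp reals measure.
From mathcomp Require Import ring lra.
Import Order.TTheory GRing.Theory Num.Theory.
Local Open Scope ring_scope.
Local Open Scope classical_set_scope.
Local Open Scope complex_scope.
Set Implicit Arguments. Unset Strict Implicit.

Section HilbertSpace.
Variables (R : realType) (H : lmodType R[i]) (ip : H -> H -> R[i]).
Hypothesis hH : is_hilbert ip.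

Lemma ipDl x y z : ip (x + y) z = ip x z + ip y z.
Proof. by rewrite -[x in LHS]scale1r (ip_linear hH) mul1r. Qed.

Lemma ip0l z : ip 0 z = 0.
Proof. by apply: (addrI (ip 0 z)); rewrite addr0 -ipDl addr0. Qed.

Lemma ipZl c x z : ip (c *: x) z = c * ip x z.
Proof. by rewrite -[c *: x]addr0 (ip_linear hH) ip0l addr0. Qed.

Lemma ipNl x z : ip (- x) z = - ip x z.
Proof. by rewrite -scaleN1r ipZl mulN1r. Qed.

Lemma ipDr x y z : ip z (x + y) = ip z x + ip z y.
Proof. by rewrite (ip_conj hH) ipDl rmorphD /= -!(ip_conj hH). Qed.

Lemma ipNr x z : ip z (- x) = - ip z x.
Proof. by rewrite (ip_conj hH) ipNl rmorphN /= -(ip_conj hH). Qed.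

Lemma ipZr c x z : ip z (c *: x) = conjc c * ip z x.
Proof. by rewrite (ip_conj hH) ipZl rmorphM /= -(ip_conj hH). Qed.

Lemma ip_suml n (g : 'I_n -> H) y :
  ip (\sum_(i < n) g i) y = \sum_(i < n) ip (g i) y.
Proof. exact: (big_morph (ip^~ y) (fun a b => ipDl a b y) (ip0l y)). Qed.

Lemma ip_sumr n (g : 'I_n -> H) y :
  ip y (\sum_(i < n) g i) = \sum_(i < n) ip y (g i).
Proof.
rewrite (ip_conj hH) ip_suml rmorph_sum /=.
by apply: eq_bigr => i _; rewrite -(ip_conj hH).
Qed.

Lemma hnorm_ge0 x : 0 <= hnorm ip x.
Proof. exact: sqrtr_ge0. Qed.

Lemma ip_normE x : ip x x = ((hnorm ip x) ^+ 2)%:C.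
Proof.
have Re_ge0 : 0 <= complex.Re (ip x x).
  by move: (ip_ge0 hH x); rewrite lecE => /andP[].
by rewrite /hnorm sqr_sqrtr // RRe_real // ger0_real ?(ip_ge0 hH).
Qed.

Lemma hnorm0 : hnorm ip 0 = 0.
Proof. by rewrite /hnorm ip0l /= sqrtr0. Qed.

Lemma hnormZ (l : R) x : hnorm ip (l%:C *: x) = `|l| * hnorm ip x.
Proof.
have /complexI sqr_eq : ((hnorm ip (l%:C *: x)) ^+ 2)%:C = ((`|l| * hnorm ip x) ^+ 2)%:C.
  rewrite -ip_normE ipZl ipZr conjc_real ip_normE.
  by rewrite exprMn real_normK ?num_real // !rmorphM /=; ring.
apply/eqP; rewrite -(@eqrXn2 _ 2) ?sqr_eq //.
  exact: hnorm_ge0.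
by rewrite mulr_ge0 ?hnorm_ge0.
Qed.

(* The parallelogram law gives this weak triangle inequality, which is all the
   convergence arguments below need (no Cauchy-Schwarz). *)
Lemma hnormD_le x y : hnorm ip (x + y) <= 2 * (hnorm ip x + hnorm ip y).
Proof.
have parallelogram : ((hnorm ip (x + y)) ^+ 2 + (hnorm ip (x - y)) ^+ 2)%:C
    = (2 * (hnorm ip x) ^+ 2 + 2 * (hnorm ip y) ^+ 2)%:C.
  rewrite rmorphD /= -!ip_normE !ipDl !ipDr !ipNl !ipNr !ip_normE.
  rewrite !rmorphD !rmorphM /= [2%:C]rmorphMn /= rmorph1; ring.
move/complexI: parallelogram.
have := hnorm_ge0 (x + y); have := hnorm_ge0 (x - y).
have := hnorm_ge0 x; have := hnorm_ge0 y.
nra.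
Qed.

Lemma bounded_sum n (f : 'I_n -> H -> H) :
  (forall i, exists M : R, forall x, hnorm ip (f i x) <= M * hnorm ip x) ->
  exists M : R, forall x, hnorm ip (\sum_(i < n) f i x) <= M * hnorm ip x.
Proof.
elim: n f => [|n IH] f f_bnd.
  by exists 0 => x; rewrite big_ord0 hnorm0 mul0r.
have [M1 bnd1] := IH (fun i => f (widen_ord (leqnSn n) i)) (fun i => f_bnd _).
have [M2 bnd2] := f_bnd ord_max.
exists (2 * (M1 + M2)) => x; rewrite big_ord_recr /=.
have := hnormD_le (\sum_(i < n) f (widen_ord (leqnSn n) i) x) (f ord_max x).
have := bnd1 x; have := bnd2 x; lra.
Qed.

Lemma hconvD u v a b :
  hconv ip u a -> hconv ip v b -> hconv ip (fun n => u n + v n) (a + b).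
Proof.
move=> cvg_u cvg_v e e_gt0.
have e4_gt0 : 0 < e / 4 by rewrite divr_gt0.
have [N1 near_u] := cvg_u _ e4_gt0; have [N2 near_v] := cvg_v _ e4_gt0.
exists (maxn N1 N2) => n n_ge.
have := near_u n (leq_trans (leq_maxl _ _) n_ge).
have := near_v n (leq_trans (leq_maxr _ _) n_ge).
rewrite opprD addrACA.
have := hnormD_le (u n - a) (v n - b); lra.
Qed.

Lemma hconvZ (l : R) u a :
  hconv ip u a -> hconv ip (fun n => l%:C *: u n) (l%:C *: a).
Proof.
move=> cvg_u e e_gt0.
have l1_gt0 : 0 < `|l| + 1 by rewrite ltr_wpDl.
have [N near_u] := cvg_u _ (divr_gt0 e_gt0 l1_gt0).
exists N => n n_ge; rewrite -scalerBr hnormZ.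
have := near_u n n_ge; rewrite ltr_pdivlMr // => lt_e.
have := hnorm_ge0 (u n - a); have := normr_ge0 l; nra.
Qed.

Lemma hconv_sum n (u : 'I_n -> nat -> H) (a : 'I_n -> H) :
  (forall i, hconv ip (u i) (a i)) ->
  hconv ip (fun N => \sum_(i < n) u i N) (\sum_(i < n) a i).
Proof.
elim: n u a => [|n IH] u a cvg_u.
  by move=> e e_gt0; exists 0%N => N _; rewrite !big_ord0 subrr hnorm0.
rewrite big_ord_recr.
under eq_fun do rewrite big_ord_recr.
apply: hconvD; last exact: cvg_u.
exact: IH (fun i => u (widen_ord (leqnSn n) i)) _ (fun i => cvg_u _).
Qed.

Lemma bounded_op_lincomb n (a : 'I_n -> H -> H) (l : 'I_n -> R) :
  (forall i, is_bounded_op ip (a i)) ->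
  is_bounded_op ip (fun x => \sum_(i < n) (l i)%:C *: a i x).
Proof.
move=> a_bnd; split.
  move=> c x y; rewrite scaler_sumr -big_split /=; apply: eq_bigr => i _.
  by rewrite (a_bnd i).1 scalerDr !scalerA mulrC.
apply: (bounded_sum (f := fun i x => (l i)%:C *: a i x)) => i.
have [M bndM] := (a_bnd i).2.
exists (`|l i| * M) => x; rewrite hnormZ -mulrA.
by rewrite ler_wpM2l ?normr_ge0.
Qed.

Lemma effect_subconvex n (a : 'I_n -> H -> H) (l : 'I_n -> R) :
  (forall i, is_effect ip (a i)) -> (forall i, 0 <= l i) ->
  \sum_(i < n) l i <= 1 ->
  is_effect ip (fun x => \sum_(i < n) (l i)%:C *: a i x).
Proof.
move=> a_eff l_ge0 l_sum; split; [|split; [|split]].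
- by apply: bounded_op_lincomb => i; have [] := a_eff i.
- move=> x y; rewrite ip_suml ip_sumr; apply: eq_bigr => i _.
  have [_ [a_sa _]] := a_eff i.
  by rewrite ipZl ipZr conjc_real a_sa.
- move=> x; rewrite ip_suml; apply: sumr_ge0 => i _.
  have [_ [_ [a_ge0 _]]] := a_eff i.
  by rewrite ipZl mulr_ge0 ?ler0c.
- move=> x; rewrite ipDl ipNl ip_suml subr_ge0.
  apply: (@le_trans _ _ (\sum_(i < n) (l i)%:C * ip x x)).
    apply: ler_sum => i _; have [_ [_ [_ a_le1]]] := a_eff i.
    move: (a_le1 x); rewrite ipDl ipNl subr_ge0 => a_le.
    by rewrite ipZl ler_wpM2l ?ler0c.
  rewrite -mulr_suml -rmorph_sum /= ler_piMl ?(ip_ge0 hH) //.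
  by rewrite -(rmorph1 (real_complex R)) lecR.
Qed.

Variables (d : measure_display) (Omega : measurableType d).

Lemma sob_subconvex n (A : 'I_n -> opfun H Omega) (l : 'I_n -> R) :
  (forall i, is_sob ip (A i)) -> (forall i, 0 <= l i) ->
  \sum_(i < n) l i <= 1 -> is_sob ip (opsum l A).
Proof.
move=> A_sob l_ge0 l_sum; split.
  by move=> E; apply: effect_subconvex => // i; apply: (A_sob i).1.
move=> F G F_disj G_cup x.
have -> : (fun N => \sum_(k < N) opsum l A (F k) x) =
          (fun N => \sum_(i < n) (l i)%:C *: \sum_(k < N) A i (F k) x).
  apply: funext => N; rewrite /opsum exchange_big /=.
  by apply: eq_bigr => i _; rewrite scaler_sumr.
apply: hconv_sum => i; apply: hconvZ.
exact: (A_sob i).2 F G F_disj G_cup x.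
Qed.

End HilbertSpace.

Section OperatorFunctions.
Variables (R : realType) (H : lmodType R[i]).
Variables (d : measure_display) (Omega : measurableType d).

Definition opzero : opfun H Omega := fun _ _ => 0.

Lemma opsum0 (A : 'I_0 -> opfun H Omega) (l : 'I_0 -> R) : opsum l A = opzero.
Proof. by apply: funext => E; apply: funext => x; rewrite /opsum big_ord0. Qed.

Lemma opsum_recr n (A : 'I_n.+1 -> opfun H Omega) (l : 'I_n.+1 -> R) :
  opsum l A = opadd (opsum (fun i => l (widen_ord (leqnSn n) i))
                           (fun i => A (widen_ord (leqnSn n) i)))
                    (opscale (l ord_max) (A ord_max)).
Proof.
by apply: funext => E; apply: funext => x; rewrite /opsum /opadd big_ord_recr.
Qed.

Lemma opscale_opsum2 (A : opfun H Omega) (l : R) :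
  opscale l A = opsum [ffun i : 'I_2 => if i == ord0 then l else 1 - l]
                      [ffun i : 'I_2 => if i == ord0 then A else opzero].
Proof.
apply: funext => E; apply: funext => x.
by rewrite /opsum !big_ord_recl big_ord0 !ffunE /= scaler0 !addr0.
Qed.

End OperatorFunctions.

Arguments opzero {R H d Omega}.

Section EffectAlgebra.
Variables (R : realType) (H : lmodType R[i]) (ip : H -> H -> R[i]).
Variables (d : measure_display) (Omega : measurableType d).
Variable U : set (opfun H Omega).
Hypothesis U_alg : sob_effect_algebra ip U.

Lemma sob_effect_algebra_zero : U opzero.
Proof.
have [_ [[Z [UZ [_ U_compl]]] _]] := U_alg.
suff <- : opsub Z Z = opzero by exact: U_compl Z UZ.
by apply: funext => E; apply: funext => x; rewrite /opsub subrr.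
Qed.

Lemma convex_scale_closed :
  convex_sob U -> forall A l, U A -> 0 <= l <= 1 -> U (opscale l A).
Proof.
move=> U_convex A l UA /andP[l_ge0 l_le1]; rewrite opscale_opsum2.
apply: U_convex => [i|i|]; rewrite ?ffunE.
- by case: eqP => _; [exact: UA | exact: sob_effect_algebra_zero].
- by case: eqP => _; apply/andP; split; lra.
- by rewrite !big_ord_recl big_ord0 !ffunE /=; lra.
Qed.

Lemma scale_closed_subconvex : is_hilbert ip ->
  (forall A l, U A -> 0 <= l <= 1 -> U (opscale l A)) ->
  forall n (A : 'I_n -> opfun H Omega) (l : 'I_n -> R),
    (forall i, U (A i)) -> (forall i, 0 <= l i) -> \sum_(i < n) l i <= 1 ->
    U (opsum l A).
Proof.
have [U_sob [_ U_add]] := U_alg.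
move=> hH scale_closed; elim=> [|n IH] A l UA l_ge0 l_sum.
  by rewrite opsum0; exact: sob_effect_algebra_zero.
have l'_ge0 : 0 <= \sum_(i < n) l (widen_ord (leqnSn n) i) by rewrite sumr_ge0.
have l'_sum : \sum_(i < n) l (widen_ord (leqnSn n) i) + l ord_max <= 1.
  by rewrite -big_ord_recr.
have lmax_ge0 := l_ge0 ord_max.
rewrite opsum_recr; apply: U_add.
- by apply: IH => //; lra.
- by apply: scale_closed => //; apply/andP; split; lra.
- by rewrite -opsum_recr; apply: sob_subconvex => // i; exact: U_sob.
Qed.

End EffectAlgebra.

Unset Implicit Arguments. Set Strict Implicit.
Local Close Scope complex_scope.

Theorem theorem3p5 (R : realType) (H : lmodType R[i]) (ip : H -> H -> R[i])
  (hH : is_hilbert ip) (d : measure_display) (Omega : measurableType d)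
  (U : set (opfun H Omega)) :
  sob_effect_algebra ip U ->
  (convex_sob U <->
   (forall (A : opfun H Omega) (l : R), U A -> 0 <= l <= 1 -> U (opscale l A))).
Proof.
move=> U_alg; split; first exact: (convex_scale_closed U_alg).
move=> scale_closed n A l UA l_01 l_sum.
apply: (scale_closed_subconvex U_alg hH scale_closed UA); last by rewrite l_sum.
by move=> i; have /andP[] := l_01 i.
Qed.
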